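(* Let $L$ be a finite field of characteristic $2$ and cardinality $q>2$ with $q\not\equiv 2,4 \pmod 5$. Let $f\colon L\to L$, $f(x)=x^s$, be a power permutation of $L$ (i.e. $\gcd(s,q-1)=1$). If $f$ is almost perfect nonlinear, then there exists $a\in L^{\times}$ such that $\widehat{f}(a)\equiv 0 \pmod 5$.
   Context: Let $\mu$ be the canonical additive character of $L$, $\mu(x)=\exp(2i\pi\,\mathrm{Tr}(x)/2)=(-1)^{\mathrm{Tr}(x)}$, where $\mathrm{Tr}$ is the absolute trace of $L/\mathbb{F}_2$. The Fourier coefficient of a map $f\colon L\to L$ at $a\in L$ is $\widehat{f}(a)=\sum_{x\in L}\mu(ax+f(x))$; here these are rational integers. A map $f\colon L\to L$ is almost perfect nonlinear (APN) if for every $u\in L^{\times}$ the map $x\mapsto f(x+u)+f(x)$ is two-to-one. *)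

From HB Require Import structures.
From mathcomp Require Import all_boot all_order all_algebra all_field.
Set Implicit Arguments. Unset Strict Implicit. Unset Printing Implicit Defensive.
Import GRing.Theory Num.Theory.
Local Open Scope ring_scope.

Definition absTr (L : finFieldType) (x : L) : L :=
  \sum_(i < logn 2 #|L|) x ^+ (2 ^ i).

(* Canonical additive character mu(x) = (-1)^Tr(x), as a rational integer
   (Tr(x) lies in the prime field {0,1}). *)
Definition mu (L : finFieldType) (x : L) : int :=
  if absTr x == 0 then 1 else -1.

Definition fourier (L : finFieldType) (f : L -> L) (a : L) : int :=
  \sum_(x : L) mu (a * x + f x).

Definition two_to_one (L : finFieldType) (g : L -> L) : Prop :=
  forall y : L, #|[set x | g x == y]| = 0%N \/ #|[set x | g x == y]| = 2%N.

Definition APN (L : finFieldType) (f : L -> L) : Prop :=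
  forall u : L, u != 0 -> two_to_one (fun x => f (x + u) + f x).

From HB Require Import structures.
From mathcomp Require Import all_boot all_order all_algebra all_field.
From mathcomp Require Import ring zify.
Import GRing.Theory Num.Theory.
Local Open Scope ring_scope.
Set Implicit Arguments. Unset Strict Implicit. Unset Printing Implicit Defensive.

(* With q = #|L| and W the Walsh spectrum of f(x) = x^s, the fourth moment
   \sum_a W(a)^4 is q times the sum of the squared autocorrelations of f.  For a
   power map these are character sums of the derivative x |-> f(x+1) + f(x),
   reindexed by the bijection u |-> u^s, and since that derivative is
   two-to-one their squares add up to 2 q^2; hence \sum_a W(a)^4 = 2 q^3.
   Now reduce mod 5.  If 5 divided no W(a) with a <> 0, Fermat would turn the
   left side into W(0)^4 + (q - 1) with W(0)^4 in {0, 1}, while q, a power of 2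
   not congruent to 2 or 4, is 1 or 3 mod 5; no case matches 2 q^3. *)

Section CharacteristicTwo.

Variable L : finFieldType.
Hypothesis pchar2 : (2 \in [pchar L])%N.

Lemma card_pchar2 : #|L| = (2 ^ logn 2 #|L|)%N.
Proof. exact: card_pprimeChar pchar2. Qed.

Lemma logn_card_pchar2_gt0 : (0 < logn 2 #|L|)%N.
Proof. by move: (finNzRing_gt1 L); rewrite {1}card_pchar2; case: (logn 2 _). Qed.

Lemma absTrD (x y : L) : absTr (x + y) = absTr x + absTr y.
Proof.
rewrite /absTr -big_split; apply: eq_bigr => i _; apply: exprDn_pchar.
by rewrite pnatX pnatE // pchar2.
Qed.

Lemma absTr_sqr (x : L) : absTr x ^+ 2 = absTr x.
Proof.
rewrite -[_ ^+ 2]/(pFrobenius_aut pchar2 _) rmorph_sum /absTr.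
case: (logn 2 #|L|) card_pchar2 logn_card_pchar2_gt0 => // n card_L _.
rewrite big_ord_recr big_ord_recl /= addrC; congr (_ + _).
  by rewrite pFrobenius_autE -exprM -expnSr -card_L expf_card.
by apply: eq_bigr => i _; rewrite pFrobenius_autE -exprM -expnSr.
Qed.

Lemma absTr_eq01 (x : L) : absTr x = 0 \/ absTr x = 1.
Proof.
have /eqP := absTr_sqr x.
rewrite expr2 -{3}[absTr x]mulr1 -subr_eq0 -mulrBr mulf_eq0 subr_eq0.
by case/orP=> /eqP ->; [left | right].
Qed.

(* The trace is a polynomial of degree 2^(n-1) < #|L| with a nonzero linear
   coefficient, so it cannot vanish at every point of L. *)
Lemma absTr_neq0 : exists x : L, absTr x != 0.
Proof.
apply/existsP; apply: contraT; rewrite negb_exists => /forallP trace0.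
have n_gt0 := logn_card_pchar2_gt0.
pose P : {poly L} := \sum_(i < logn 2 #|L|) 'X^(2 ^ i).
have P_eq0 : P = 0.
  apply: (@roots_geq_poly_eq0 _ P (enum L)) (enum_uniq _) _.
    apply/allP => x _; rewrite /root /P horner_sum.
    by under eq_bigr do rewrite hornerXn; exact: negbNE (trace0 x).
  rewrite -cardE card_pchar2; apply: leq_trans (size_sum _ _ _) _.
  by apply/bigmax_leqP => i _; rewrite size_polyXn ltn_exp2l.
have : P`_1 = 1.
  rewrite /P coef_sum -(prednK n_gt0) big_ord_recl /= coefXn expn0 eqxx big1 ?addr0 //.
  by move=> i _; rewrite coefXn eq_sym gtn_eqF // -{1}(expn0 2) ltn_exp2l.
by rewrite P_eq0 coef0 => /eqP; rewrite eq_sym oner_eq0.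
Qed.

Lemma mu0 : mu (0 : L) = 1.
Proof. by rewrite /mu /absTr big1 ?eqxx // => i _; rewrite expr0n expn_eq0. Qed.

Lemma muD (x y : L) : mu (x + y) = mu x * mu y.
Proof.
rewrite /mu absTrD.
by case: (absTr_eq01 x) (absTr_eq01 y) => -> [] ->;
  rewrite ?addr0 ?add0r ?eqxx ?oner_eq0 ?addrr_pchar2 ?eqxx.
Qed.

Lemma sum_mu : \sum_(x : L) mu x = 0.
Proof.
have [x0 tr_x0] := absTr_neq0.
have mu_x0 : mu x0 = -1 by rewrite /mu (negbTE tr_x0).
suff : \sum_(x : L) mu x = - \sum_(x : L) mu x by lia.
rewrite {1}(reindex_inj (addIr x0)) -sumrN /=.
by apply: eq_bigr => x _; rewrite muD mu_x0 mulrN1.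
Qed.

Lemma sum_muM (t : L) : \sum_(a : L) mu (a * t) = if t == 0 then #|L|%:Z else 0.
Proof.
have [-> | t_neq0] := eqVneq t 0.
  by under eq_bigr do rewrite mulr0 mu0; rewrite sumr_const cardT -cardE natz.
by rewrite -[RHS]sum_mu [RHS](reindex_inj (mulIf t_neq0)).
Qed.

Definition autocorr (f : L -> L) (u : L) : int := \sum_(x : L) mu (f x + f (x + u)).

Definition charsum (g : L -> L) (c : L) : int := \sum_(x : L) mu (c * g x).

Lemma fourier_sqr (f : L -> L) (a : L) :
  fourier f a ^+ 2 = \sum_(u : L) mu (a * u) * autocorr f u.
Proof.
rewrite /fourier expr2 mulr_suml.
under eq_bigr => x _ do rewrite mulr_sumr (reindex_inj (addrI x)).
rewrite exchange_big /=; apply: eq_bigr => u _; rewrite mulr_sumr.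
apply: eq_bigr => x _; rewrite -!muD; congr mu.
have -> : a * x + f x + (a * (x + u) + f (x + u))
        = (a * x + a * x) + (a * u + (f x + f (x + u))) by ring.
by rewrite addrr_pchar2 // add0r.
Qed.

Lemma sum_fourier_expr4 (f : L -> L) :
  \sum_(a : L) fourier f a ^+ 4 = #|L|%:Z * \sum_(u : L) autocorr f u ^+ 2.
Proof.
transitivity (\sum_(u : L) \sum_(v : L)
    (autocorr f u * autocorr f v) * \sum_(a : L) mu (a * (u + v))).
  rewrite -[4%N]/(2 + 2)%N; under eq_bigr do rewrite exprD fourier_sqr mulr_suml.
  rewrite exchange_big; apply: eq_bigr => u _.
  under eq_bigr do rewrite mulr_sumr.
  rewrite exchange_big; apply: eq_bigr => v _; rewrite mulr_sumr.
  by apply: eq_bigr => a _; rewrite mulrDr muD; ring.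
rewrite mulr_sumr; apply: eq_bigr => u _.
rewrite (bigD1 u) //= sum_muM addrr_pchar2 // eqxx big1 ?addr0; first by ring.
move=> v v_neq_u; rewrite sum_muM addr_eq0 oppr_pchar2 // eq_sym.
by rewrite (negbTE v_neq_u) mulr0.
Qed.

Lemma sum_charsum_sqr_two_to_one (g : L -> L) :
  two_to_one g -> \sum_(c : L) charsum g c ^+ 2 = #|L|%:Z ^+ 2 *+ 2.
Proof.
move=> g_2to1.
transitivity (\sum_(x : L) \sum_(z : L) \sum_(c : L) mu (c * (g x + g z))).
  under eq_bigr do rewrite expr2 mulr_suml.
  rewrite exchange_big; apply: eq_bigr => x _.
  under eq_bigr do rewrite mulr_sumr.
  rewrite exchange_big; apply: eq_bigr => z _.
  by apply: eq_bigr => c _; rewrite mulrDr muD.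
transitivity (\sum_(x : L) #|L|%:Z *+ 2).
  apply: eq_bigr => x _.
  under eq_bigr do rewrite sum_muM addr_eq0 oppr_pchar2 // eq_sym.
  rewrite -big_mkcond sumr_const; congr (_ *+ _).
  have -> : #|(fun z => g z == g x)| = #|[set z | g z == g x]|.
    by apply: eq_card => z; rewrite inE.
  case: (g_2to1 (g x)) => // /eqP; rewrite cards_eq0 => /eqP/setP/(_ x).
  by rewrite !inE eqxx.
rewrite sumr_const -mulrnA mulnC mulrnA; congr (_ *+ 2).
by rewrite -mulr_natr natz expr2.
Qed.

End CharacteristicTwo.

Lemma expf_coprime_inj (F : finFieldType) (s : nat) :
  coprime s #|F|.-1 -> (0 < s)%N -> injective (fun x : F => x ^+ s).
Proof.
move=> s_coprime s_gt0.
have card_gt1 := finNzRing_gt1 F.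
have [a _] : {a | (a < #|F|.-1)%N & (#|F|.-1 %| gcdn #|F|.-1 s + a * s)%N}.
  by apply: Bezoutl; rewrite -ltnS prednK // ltnW.
rewrite gcdnC (eqP s_coprime) => /dvdnP[k as_eq].
have mul_expK (x : F) : x != 0 -> x * (x ^+ s) ^+ a = 1.
  move=> x_neq0; have fermat : x ^+ #|F|.-1 = 1.
    by apply: (mulIf x_neq0); rewrite mul1r -exprSr prednK ?expf_card // ltnW.
  by rewrite -exprM -exprS -addn1 addnC mulnC as_eq mulnC exprM fermat expr1n.
have exp_eq0 (x : F) : (x ^+ s == 0) = (x == 0) by rewrite expf_eq0 s_gt0.
move=> x y /= xy_s; have [x0 | x_neq0] := eqVneq x 0.
  move: xy_s; rewrite x0 expr0n gtn_eqF // => /esym/eqP.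
  by rewrite exp_eq0 eq_sym => /eqP.
have y_neq0 : y != 0 by rewrite -exp_eq0 -xy_s exp_eq0.
apply: (mulIf (x := (x ^+ s) ^+ a)); first by rewrite !expf_neq0.
by rewrite mul_expK // xy_s mul_expK.
Qed.

Section PowerMaps.

Variables (L : finFieldType) (s : nat).
Hypotheses (pchar2 : (2 \in [pchar L])%N) (s_gt0 : (0 < s)%N).

Local Notation f := (fun x : L => x ^+ s).
Local Notation der1 := (fun x : L => (x + 1) ^+ s + x ^+ s).

(* Substitute x := y * u. *)
Lemma autocorr_expr (u : L) : autocorr f u = charsum der1 (u ^+ s).
Proof.
have [-> | u_neq0] := eqVneq u 0.
  rewrite /autocorr /charsum expr0n gtn_eqF //; apply: eq_bigr => x _.
  by rewrite addr0 addrr_pchar2 // mul0r.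
rewrite /autocorr (reindex_inj (mulIf u_neq0)); apply: eq_bigr => y _ /=.
have -> : y * u + u = (y + 1) * u by ring.
by rewrite !exprMn; congr mu; ring.
Qed.

Lemma sum_fourier_expr4_APN :
  coprime s #|L|.-1 -> APN f ->
  \sum_(a : L) fourier f a ^+ 4 = #|L|%:Z ^+ 3 *+ 2.
Proof.
move=> s_coprime f_APN.
rewrite (sum_fourier_expr4 pchar2) exprS -mulrnAr.
rewrite -(sum_charsum_sqr_two_to_one pchar2 (f_APN 1 (oner_neq0 L))).
rewrite [in RHS](reindex_inj (expf_coprime_inj s_coprime s_gt0)) /=.
by under eq_bigr do rewrite autocorr_expr.
Qed.

End PowerMaps.

Lemma Fp5_expr4 (x : 'F_5) : x != 0 -> x ^+ 4 = 1.
Proof.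
move=> x_neq0; apply: (mulIf x_neq0); rewrite mul1r -exprSr.
by have := expf_card x; rewrite card_Fp.
Qed.

Lemma Fp5_sum_expr4 (T : finType) (x0 : T) (F : T -> int) :
    (forall x, x != x0 -> ~~ (5 %| F x)%Z) ->
  ((\sum_(x : T) F x ^+ 4)%:~R : 'F_5) = (F x0)%:~R ^+ 4 + #|T|.-1%:R.
Proof.
move=> F_coprime; rewrite rmorph_sum (bigD1 x0) //= rmorphXn; congr (_ + _).
rewrite -(cardC1 x0) -sumr_const; apply: eq_bigr => x x_neq_x0.
rewrite rmorphXn Fp5_expr4 //.
by rewrite -(dvdz_pcharf (pchar_Fp (isT : prime 5))) F_coprime.
Qed.

Lemma Fp5_expr4_add_neq (w : 'F_5) (k : nat) :
  (k %% 5 = 1 \/ k %% 5 = 3)%N -> w ^+ 4 + k.-1%:R != k%:R ^+ 3 *+ 2.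
Proof.
move=> k_mod5; have k_gt0 : (0 < k)%N by case: k k_mod5 => [[]|].
have -> : k%:R = k.-1%:R + 1 :> 'F_5 by rewrite natr1 prednK.
rewrite -[k.-1%:R]Fp_nat_mod //.
have w4 : w ^+ 4 = 0 \/ w ^+ 4 = 1.
  by have [-> | /Fp5_expr4 ->] := eqVneq w 0; [left; rewrite expr0n | right].
have : (k.-1 %% 5 = 0 \/ k.-1 %% 5 = 2)%N by lia.
by case=> ->; case: w4 => ->.
Qed.

Theorem mainTheorem1 (L : finFieldType) (s : nat) :
  (2 \in [pchar L])%N ->
  (2 < #|L|)%N ->
  (#|L| %% 5 != 2)%N -> (#|L| %% 5 != 4)%N ->
  coprime s #|L|.-1 ->
  APN (fun x : L => x ^+ s) ->
  exists2 a : L, a != 0 & (5 %| fourier (fun x : L => x ^+ s) a)%Z.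
Proof.
move=> pchar2 card_gt2 card5_neq2 card5_neq4 s_coprime f_APN.
set W := fourier _.
have s_gt0 : (0 < s)%N.
  by case: s s_coprime {W f_APN} => // /eqP; rewrite gcd0n; lia.
have card_mod5 : (#|L| %% 5 = 1 \/ #|L| %% 5 = 3)%N.
  have : ~~ (5 %| #|L|)%N by rewrite (card_pchar2 pchar2) Euclid_dvdX.
  lia.
have [a /andP[a_neq0 W5a] | W_coprime] := pickP (fun a => (a != 0) && (5 %| W a)%Z).
  by exists a.
have := Fp5_expr4_add_neq ((W 0)%:~R) card_mod5.
rewrite -(Fp5_sum_expr4 (x0 := 0)) => [|a a_neq0]; last first.
  by have := W_coprime a; rewrite a_neq0 => /negbT.
by rewrite sum_fourier_expr4_APN // rmorphMn rmorphXn /= -pmulrn eqxx.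
Qed.
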